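(* Let $R$ be a ring and let $\mathcal{S}$ be a sublattice of the lattice of two-sided ideals of $R$ which is closed under arbitrary intersections and contains $\{0\}$ and $R$. Suppose that for each $I\in\mathcal{S}$ we have $I=\ker(\{\mathfrak{p}\in\mathrm{Spec}_{\mathcal{S}}(R):\mathfrak{p}\supseteq I\})$. For an open set $U$ of $\mathrm{Spec}_{\mathcal{S}}(R)$ (Jacobson topology) put $R[U]=\ker(U^c)$. Then for all open $U,V$ we have $$R[U\cup V]=R[U]+R[V]\quad\text{and}\quad R[U\cap V]=R[U]\cap R[V].$$ Consequently, if $V_1,V_2,U_1,U_2$ are open with $V_1\subseteq U_1$, $V_2\subseteq U_2$ and $U_1\setminus V_1=U_2\setminus V_2$, then there exists an isomorphism from $R[U_1]/R[V_1]$ to $R[U_2]/R[V_2]$, and this isomorphism is natural: if also $V_3\subseteq U_3$ are open with $U_3\setminus V_3=U_1\setminus V_1$, then the composition of the isomorphisms $R[U_1]/R[V_1]\to R[U_2]/R[V_2]$ and $R[U_2]/R[V_2]\to R[U_3]/R[V_3]$ equals the isomorphism $R[U_1]/R[V_1]\to R[U_3]/R[V_3]$.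
   Context: An ideal $P\in\mathcal{S}$ is $\mathcal{S}$-prime if $P\neq R$ and for all $I,J\in\mathcal{S}$, $IJ\subseteq P$ implies $I\subseteq P$ or $J\subseteq P$; $\mathrm{Spec}_{\mathcal{S}}(R)$ is the set of $\mathcal{S}$-prime ideals. For $T\subseteq\mathrm{Spec}_{\mathcal{S}}(R)$, $\ker(T)=\bigcap_{\mathfrak{p}\in T}\mathfrak{p}$ (with $\ker(\emptyset)=R$), and $U^c$ denotes complement in $\mathrm{Spec}_{\mathcal{S}}(R)$. The Jacobson topology is the topology whose closure operation is $\overline{T}=\{\mathfrak{p}\in\mathrm{Spec}_{\mathcal{S}}(R):\mathfrak{p}\supseteq\ker(T)\}$. *)

From HB Require Import structures.
From mathcomp Require Import all_boot all_algebra.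
From mathcomp Require Import boolp classical_sets.
Set Implicit Arguments. Unset Strict Implicit. Unset Printing Implicit Defensive.
Import GRing.Theory.
Local Open Scope ring_scope.
Local Open Scope classical_set_scope.

Section Ideals.
Variable R : pzRingType.

Definition is_ideal (I : set R) : Prop :=
  [/\ I 0,
      (forall x y, I x -> I y -> I (x + y)),
      (forall x, I x -> I (- x)),
      (forall r x, I x -> I (r * x)) &
      (forall r x, I x -> I (x * r))].

Definition isum (I J : set R) : set R :=
  [set z | exists a b, [/\ I a, J b & z = a + b]].

Definition iprod (I J : set R) : set R :=
  [set z | forall K : set R, is_ideal K ->
     (forall a b, I a -> J b -> K (a * b)) -> K z].

Definition good_family (S : set (set R)) : Prop :=
  (forall I, S I -> is_ideal I) /\
  (forall I J, S I -> S J -> S (isum I J)) /\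
  (forall I J, S I -> S J -> S (I `&` J)) /\
  (forall F : set (set R), F `<=` S -> S (\bigcap_(I in F) I)) /\
  S [set 0 : R] /\ S setT.

Definition Sprime (S : set (set R)) (P : set R) : Prop :=
  [/\ S P, P <> setT &
      forall I J, S I -> S J -> iprod I J `<=` P -> I `<=` P \/ J `<=` P].

Definition Spec (S : set (set R)) : set (set R) := [set P | Sprime S P].

(* ker T = intersection of the primes in T (ker of the empty family is R) *)
Definition ker (T : set (set R)) : set R := \bigcap_(p in T) p.

Definition jclosure (S : set (set R)) (T : set (set R)) : set (set R) :=
  [set p | Spec S p /\ ker T `<=` p].

Definition scompl (S : set (set R)) (U : set (set R)) : set (set R) :=
  Spec S `\` U.

Definition jopen (S : set (set R)) (U : set (set R)) : Prop :=
  U `<=` Spec S /\ jclosure S (scompl S U) = scompl S U.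

Definition sect (S : set (set R)) (U : set (set R)) : set R :=
  ker (scompl S U).

(* f : R -> R represents an isomorphism I1/J1 -> I2/J2 (J1 ⊆ I1, J2 ⊆ I2
   ideals): it maps I1 into I2, is well defined and injective modulo J1/J2,
   surjective modulo J2, and compatible (modulo J2) with addition,
   multiplication and the left/right R-actions. *)
Definition quot_iso (I1 J1 I2 J2 : set R) (f : R -> R) : Prop :=
  [/\ (forall x, I1 x -> I2 (f x)),
      (forall x y, I1 x -> I1 y -> J1 (x - y) -> J2 (f x - f y)),
      (forall x y, I1 x -> I1 y -> J2 (f x - f y) -> J1 (x - y)),
      (forall z, I2 z -> exists x, I1 x /\ J2 (z - f x)) &
      [/\ (forall x y, I1 x -> I1 y -> J2 (f (x + y) - (f x + f y))),
          (forall x y, I1 x -> I1 y -> J2 (f (x * y) - f x * f y)),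
          (forall r x, I1 x -> J2 (f (r * x) - r * f x)) &
          (forall r x, I1 x -> J2 (f (x * r) - f x * r))]].

End Ideals.

(* For open U, a prime containing R[U] lies outside U, so primeness makes open
   sets stable under intersection.  As R[U] + R[V] is in S, it is the
   intersection of the primes containing it, all of which lie outside U `|` V;
   hence R[U `|` V] = R[U] + R[V].
   If U1 `\` V1 = U2 `\` V2 then U1 = V1 `|` (U1 `&` U2); with A = R[U1 `&` U2]
   this gives R[U1] = R[V1] + A and R[U2] = R[V2] + A, while
   A `&` R[V1] = A `&` R[V2] because U1 `&` U2 `&` V1 = U1 `&` U2 `&` V2.
   The second isomorphism theorem now yields R[U1]/R[V1] ~ R[U2]/R[V2],
   sending x to any a in A congruent to x modulo R[V1].  Composing two such
   maps and comparing with the third, the difference lies in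
   R[U3] `&` R[V1 `|` V2] = R[U3 `&` (V1 `|` V2)], which is inside R[V3]. *)

From HB Require Import structures.
From mathcomp Require Import all_boot all_algebra.
From mathcomp Require Import boolp classical_sets.
Import GRing.Theory.
Local Open Scope ring_scope.
Local Open Scope classical_set_scope.

Section IdealTheory.
Context {R : pzRingType}.
Implicit Types (I J A : set R) (x y r : R).

Definition eqmod I x y := I (x - y).

Section OneIdeal.
Context {I : set R} (idI : is_ideal I).

Lemma ideal0 : I 0. Proof. by case: idI. Qed.

Lemma idealD {x y} : I x -> I y -> I (x + y).
Proof. by case: idI => _ D _ _ _; apply: D. Qed.

Lemma idealN {x} : I x -> I (- x).
Proof. by case: idI => _ _ N _ _; apply: N. Qed.

Lemma idealB {x y} : I x -> I y -> I (x - y).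
Proof. by move=> Ix Iy; apply: idealD => //; apply: idealN. Qed.

Lemma idealMl r {x} : I x -> I (r * x).
Proof. by case: idI => _ _ _ M _; apply: M. Qed.

Lemma idealMr r {x} : I x -> I (x * r).
Proof. by case: idI => _ _ _ _ M; apply: M. Qed.

Lemma eqmod_sym {x y} : eqmod I x y -> eqmod I y x.
Proof. by rewrite /eqmod -opprB => /idealN; rewrite opprK. Qed.

Lemma eqmod_trans {y x z} : eqmod I x y -> eqmod I y z -> eqmod I x z.
Proof. by move=> Ixy /(idealD Ixy); rewrite /eqmod addrA subrK. Qed.

Lemma eqmodD {x y x' y'} :
  eqmod I x y -> eqmod I x' y' -> eqmod I (x + x') (y + y').
Proof. by move=> Ixy /(idealD Ixy); rewrite /eqmod opprD addrACA. Qed.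

Lemma eqmodMl r {x y} : eqmod I x y -> eqmod I (r * x) (r * y).
Proof. by rewrite /eqmod -mulrBr; apply: idealMl. Qed.

Lemma eqmodMr r {x y} : eqmod I x y -> eqmod I (x * r) (y * r).
Proof. by rewrite /eqmod -mulrBl; apply: idealMr. Qed.

Lemma eqmodM {x y x' y'} :
  eqmod I x y -> eqmod I x' y' -> eqmod I (x * x') (y * y').
Proof.
move=> /(eqmodMr x') exy /(eqmodMl y) exy'; exact: eqmod_trans exy exy'.
Qed.

End OneIdeal.

Lemma bigcap_ideal (F : set (set R)) :
  (forall I, F I -> is_ideal I) -> is_ideal (\bigcap_(I in F) I).
Proof.
move=> idF; split.
- by move=> I /idF /ideal0.
- by move=> x y Fx Fy I FI; apply: (idealD (idF I FI)); [apply: Fx|apply: Fy].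
- by move=> x Fx I FI; apply: (idealN (idF I FI)); apply: Fx.
- by move=> r x Fx I FI; apply: (idealMl (idF I FI)); apply: Fx.
- by move=> r x Fx I FI; apply: (idealMr (idF I FI)); apply: Fx.
Qed.

Lemma isum_ideal {I J} : is_ideal I -> is_ideal J -> is_ideal (isum I J).
Proof.
move=> idI idJ; split.
- by exists 0, 0; rewrite addr0; split => //; apply: ideal0.
- move=> _ _ [a [b [Ia Jb ->]]] [a' [b' [Ia' Jb' ->]]].
  by exists (a + a'), (b + b'); rewrite addrACA; split => //; apply: idealD.
- move=> _ [a [b [Ia Jb ->]]].
  by exists (- a), (- b); rewrite opprD; split => //; apply: idealN.
- move=> r _ [a [b [Ia Jb ->]]].
  by exists (r * a), (r * b); rewrite mulrDr; split => //; apply: idealMl.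
- move=> r _ [a [b [Ia Jb ->]]].
  by exists (a * r), (b * r); rewrite mulrDl; split => //; apply: idealMr.
Qed.

Lemma isum_subl I J : is_ideal J -> I `<=` isum I J.
Proof.
by move=> idJ x Ix; exists x, 0; rewrite addr0; split => //; apply: ideal0.
Qed.

Lemma isum_subr I J : is_ideal I -> J `<=` isum I J.
Proof.
by move=> idI x Jx; exists 0, x; rewrite add0r; split => //; apply: ideal0.
Qed.

(* Some [a] in [A] with [x = a] modulo [J]; it exists when [x] is in [J + A],
   otherwise the value is the junk [0]. *)
Definition proj_along J A x : R := xget 0 [set a | A a /\ eqmod J x a].

Lemma proj_alongP {J A x} :
  isum J A x -> A (proj_along J A x) /\ eqmod J x (proj_along J A x).
Proof.
move=> [j [a [Jj Aa ->]]]; apply: (xgetPex 0 (P := [set b | A b /\ _])).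
by exists a; split; rewrite // /eqmod addrK.
Qed.

(* (J1 + A)/J1 ~ A/(A `&` J1) = A/(A `&` J2) ~ (J2 + A)/J2 *)
Section SecondIsomorphism.
Variables J1 J2 A : set R.
Hypotheses (idJ1 : is_ideal J1) (idJ2 : is_ideal J2) (idA : is_ideal A).
Hypothesis AJ1_AJ2 : A `&` J1 = A `&` J2.

Let f := proj_along J1 A.
Let I1 := isum J1 A.
Let idI1 : is_ideal I1 := isum_ideal idJ1 idA.

Let fA {x} : I1 x -> A (f x).
Proof. by move=> Ix; case: (proj_alongP Ix). Qed.
Let fJ {x} : I1 x -> eqmod J1 x (f x).
Proof. by move=> Ix; case: (proj_alongP Ix). Qed.
Let fJ' {x} : I1 x -> eqmod J1 (f x) x.
Proof. by move=> /fJ /(eqmod_sym idJ1). Qed.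

Let eqmod12 {a b} : A a -> A b -> eqmod J1 a b -> eqmod J2 a b.
Proof.
move=> Aa Ab J1ab; have : (A `&` J1) (a - b) by split => //; apply: idealB.
by rewrite AJ1_AJ2 => -[].
Qed.

Let eqmod21 {a b} : A a -> A b -> eqmod J2 a b -> eqmod J1 a b.
Proof.
move=> Aa Ab J2ab; have : (A `&` J2) (a - b) by split => //; apply: idealB.
by rewrite -AJ1_AJ2 => -[].
Qed.

Lemma quot_iso_proj_along :
  quot_iso (isum J1 A) J1 (isum J2 A) J2 (proj_along J1 A).
Proof.
split; last split.
- by move=> x /fA; apply: isum_subr.
- move=> x y Ix Iy Jxy; apply: (eqmod12 (fA Ix) (fA Iy)).
  exact: (eqmod_trans idJ1 (fJ' Ix) (eqmod_trans idJ1 Jxy (fJ Iy))).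
- move=> x y Ix Iy /(eqmod21 (fA Ix) (fA Iy)) Jfxy.
  exact: (eqmod_trans idJ1 (fJ Ix) (eqmod_trans idJ1 Jfxy (fJ' Iy))).
- move=> _ [j [a [Jj Aa ->]]].
  have Ia : I1 a by apply: isum_subr.
  exists a; split => //; apply: (eqmod_trans idJ2 (y := a)).
  + by rewrite /eqmod addrK.
  + exact: eqmod12 Aa (fA Ia) (fJ Ia).
- move=> x y Ix Iy; have Ixy := idealD idI1 Ix Iy.
  apply: (eqmod12 (fA Ixy) (idealD idA (fA Ix) (fA Iy))).
  exact: (eqmod_trans idJ1 (fJ' Ixy) (eqmodD idJ1 (fJ Ix) (fJ Iy))).
- move=> x y Ix Iy; have Ixy := idealMr idI1 y Ix.
  apply: (eqmod12 (fA Ixy) (idealMr idA _ (fA Ix))).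
  exact: (eqmod_trans idJ1 (fJ' Ixy) (eqmodM idJ1 (fJ Ix) (fJ Iy))).
- move=> r x Ix; have Irx := idealMl idI1 r Ix.
  apply: (eqmod12 (fA Irx) (idealMl idA r (fA Ix))).
  exact: (eqmod_trans idJ1 (fJ' Irx) (eqmodMl idJ1 r (fJ Ix))).
- move=> r x Ix; have Ixr := idealMr idI1 r Ix.
  apply: (eqmod12 (fA Ixr) (idealMr idA r (fA Ix))).
  exact: (eqmod_trans idJ1 (fJ' Ixr) (eqmodMr idJ1 r (fJ Ix))).
Qed.

End SecondIsomorphism.

End IdealTheory.

Lemma setI_sub_of_setD_eq {T : Type} {U1 V1 U2 V2 : set T} :
  U1 `\` V1 = U2 `\` V2 -> U1 `&` V2 `<=` V1.
Proof.
move=> eqD p [U1p V2p]; apply: contrapT => nV1p.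
by have [] : (U2 `\` V2) p by rewrite -eqD.
Qed.

Lemma setU_setI_of_setD_eq {T : Type} {U1 V1 U2 V2 : set T} :
  V1 `<=` U1 -> U1 `\` V1 = U2 `\` V2 -> U1 = V1 `|` (U1 `&` U2).
Proof.
move=> V1U1 eqD; apply/seteqP; split => p; last by case=> [/V1U1|[]].
move=> U1p; have [|nV1p] := pselect (V1 p); first by left.
by right; split => //; have [] : (U2 `\` V2) p by rewrite -eqD.
Qed.

Section JacobsonSections.
Context {R : pzRingType}.
Variable S : set (set R).
Hypothesis gS : good_family S.
Implicit Types (U V W : set (set R)) (p : set R).

Lemma Spec_ideal p : Spec S p -> is_ideal p.
Proof. by case=> Sp _ _; apply: gS.1. Qed.

Lemma sect_ideal U : is_ideal (sect S U).
Proof. by apply: bigcap_ideal => p [/Spec_ideal]. Qed.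

Lemma S_sect U : S (sect S U).
Proof. by have [_ [_ [_ [S_bigcap _]]]] := gS; apply: S_bigcap => p [[]]. Qed.

Lemma le_sect U V : U `<=` V -> sect S U `<=` sect S V.
Proof. by move=> UV x Ux p [Sp nVp]; apply: Ux; split => // /UV. Qed.

Lemma sectI_le U V W : U `&` V `<=` W -> sect S U `&` sect S V `<=` sect S W.
Proof.
move=> UVW x [Ux Vx] p [Sp nWp].
have [Up|nUp] := pselect (U p); last exact: Ux.
have [Vp|nVp] := pselect (V p); last exact: Vx.
by case: nWp; apply: UVW.
Qed.

Lemma sectI U V : sect S (U `&` V) = sect S U `&` sect S V.
Proof.
apply/seteqP; split; last exact: sectI_le.
by move=> x UVx; split; apply: le_sect UVx => p [].
Qed.

Lemma jopen_notin {U p} : jopen S U -> Spec S p -> sect S U `<=` p -> ~ U p.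
Proof.
move=> [_ clU] Sp le_p; have : jclosure S (scompl S U) p by [].
by rewrite clU => -[].
Qed.

Lemma jopenI U V : jopen S U -> jopen S V -> jopen S (U `&` V).
Proof.
move=> oU oV; split; first by move=> p [/oU.1].
apply/seteqP; split => p; last by move=> [Sp nUVp]; split => // x; apply.
move=> [Sp le_p]; split => // -[Up Vp].
have [_ _ prime_p] := Sp.
have UV_p : iprod (sect S U) (sect S V) `<=` p.
  move=> x UVx; apply: le_p; apply: UVx; first exact: sect_ideal.
  move=> a b Ua Vb; rewrite -/(sect S (U `&` V)) sectI; split.
  - exact: (idealMr (sect_ideal U) b Ua).
  - exact: (idealMl (sect_ideal V) a Vb).
by case: (prime_p _ _ (S_sect U) (S_sect V) UV_p) => /(jopen_notin _ Sp); apply.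
Qed.

Definition sect_transfer U1 V1 U2 : R -> R :=
  proj_along (sect S V1) (sect S (U1 `&` U2)).

Hypothesis ker_hull : forall I, S I -> I = ker [set p | Spec S p /\ I `<=` p].

Lemma sectU U V :
  jopen S U -> jopen S V -> sect S (U `|` V) = isum (sect S U) (sect S V).
Proof.
move=> oU oV; apply/seteqP; split => x; last first.
  move=> [a [b [Ua Vb ->]]]; apply: (idealD (sect_ideal _)).
  - by apply: le_sect Ua => p; left.
  - by apply: le_sect Vb => p; right.
have S_UV : S (isum (sect S U) (sect S V)) by apply: gS.2.1; apply: S_sect.
move=> UVx; rewrite (ker_hull _ S_UV) => p [Sp le_p].
apply: UVx; split => // -[Up|Vp].
- apply: jopen_notin oU Sp _ Up => a Ua; apply: le_p.
  by apply: isum_subl => //; apply: sect_ideal.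
- apply: jopen_notin oV Sp _ Vp => b Vb; apply: le_p.
  by apply: isum_subr => //; apply: sect_ideal.
Qed.

Lemma sect_setD_decomp {U1 V1 U2 V2} :
  jopen S U1 -> jopen S V1 -> jopen S U2 ->
  V1 `<=` U1 -> U1 `\` V1 = U2 `\` V2 ->
  sect S U1 = isum (sect S V1) (sect S (U1 `&` U2)).
Proof.
move=> oU1 oV1 oU2 V1U1 eqD.
by rewrite {1}(setU_setI_of_setD_eq V1U1 eqD) sectU //; apply: jopenI.
Qed.

Lemma quot_iso_sect_transfer U1 V1 U2 V2 :
  jopen S U1 -> jopen S V1 -> jopen S U2 -> jopen S V2 ->
  V1 `<=` U1 -> V2 `<=` U2 -> U1 `\` V1 = U2 `\` V2 ->
  quot_iso (sect S U1) (sect S V1) (sect S U2) (sect S V2)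
           (sect_transfer U1 V1 U2).
Proof.
move=> oU1 oV1 oU2 oV2 V1U1 V2U2 eqD.
rewrite (sect_setD_decomp oU1 oV1 oU2 V1U1 eqD).
rewrite (sect_setD_decomp oU2 oV2 oU1 V2U2 (esym eqD)) [U2 `&` U1]setIC.
apply: quot_iso_proj_along; try exact: sect_ideal.
rewrite -!sectI; congr sect.
apply/seteqP; split => p [[U1p U2p] Vp]; split => //.
- exact: (setI_sub_of_setD_eq (esym eqD)) _ (conj U2p Vp).
- exact: (setI_sub_of_setD_eq eqD) _ (conj U1p Vp).
Qed.

Lemma sect_transfer_comp U1 V1 U2 V2 U3 V3 :
  jopen S U1 -> jopen S V1 -> jopen S U2 -> jopen S V2 -> jopen S U3 ->
  V1 `<=` U1 -> V2 `<=` U2 -> U1 `\` V1 = U2 `\` V2 -> U3 `\` V3 = U1 `\` V1 ->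
  forall x, sect S U1 x ->
  sect S V3 (sect_transfer U2 V2 U3 (sect_transfer U1 V1 U2 x)
             - sect_transfer U1 V1 U3 x).
Proof.
move=> oU1 oV1 oU2 oV2 oU3 V1U1 V2U2 eqD12 eqD31 x U1x.
have eqD23 : U2 `\` V2 = U3 `\` V3 by rewrite eqD31 eqD12.
set a := sect_transfer U1 V1 U2 x; set b := sect_transfer U2 V2 U3 a.
set c := sect_transfer U1 V1 U3 x.
have [U12a xa] : sect S (U1 `&` U2) a /\ eqmod (sect S V1) x a.
  by apply: proj_alongP; rewrite -(sect_setD_decomp oU1 oV1 oU2 V1U1 eqD12).
have [U23b ab] : sect S (U2 `&` U3) b /\ eqmod (sect S V2) a b.
  apply: proj_alongP; rewrite -(sect_setD_decomp oU2 oV2 oU3 V2U2 eqD23).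
  by apply: le_sect U12a => p [].
have [U13c xc] : sect S (U1 `&` U3) c /\ eqmod (sect S V1) x c.
  apply: proj_alongP.
  by rewrite -(sect_setD_decomp oU1 oV1 oU3 V1U1 (esym eqD31)).
set W := V1 `|` V2; have idW := sect_ideal W.
have V1W : sect S V1 `<=` sect S W by apply: le_sect => p; left.
have V2W : sect S V2 `<=` sect S W by apply: le_sect => p; right.
apply: (@sectI_le U3 W); first move=> p [U3p [V1p|V2p]].
- by apply: (setI_sub_of_setD_eq eqD31).
- by apply: (setI_sub_of_setD_eq (esym eqD23)).
split.
- apply: (idealB (sect_ideal U3)).
  + by apply: le_sect U23b => p [].
  + by apply: le_sect U13c => p [].
- exact: (eqmod_trans idW (eqmod_sym idW (V2W _ ab))
           (eqmod_trans idW (eqmod_sym idW (V1W _ xa)) (V1W _ xc))).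
Qed.

End JacobsonSections.

Theorem lemma3p5 (R : pzRingType) (S : set (set R)) :
  good_family S ->
  (forall I, S I -> I = ker [set p | Spec S p /\ I `<=` p]) ->
  (forall U V, jopen S U -> jopen S V ->
     sect S (U `|` V) = isum (sect S U) (sect S V) /\
     sect S (U `&` V) = sect S U `&` sect S V) /\
  (exists phi : set (set R) -> set (set R) -> set (set R) -> set (set R) -> R -> R,
     (forall U1 V1 U2 V2,
        jopen S U1 -> jopen S V1 -> jopen S U2 -> jopen S V2 ->
        V1 `<=` U1 -> V2 `<=` U2 -> U1 `\` V1 = U2 `\` V2 ->
        quot_iso (sect S U1) (sect S V1) (sect S U2) (sect S V2)
                 (phi U1 V1 U2 V2)) /\
     (forall U1 V1 U2 V2 U3 V3,
        jopen S U1 -> jopen S V1 -> jopen S U2 -> jopen S V2 ->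
        jopen S U3 -> jopen S V3 ->
        V1 `<=` U1 -> V2 `<=` U2 -> V3 `<=` U3 ->
        U1 `\` V1 = U2 `\` V2 -> U3 `\` V3 = U1 `\` V1 ->
        forall x, sect S U1 x ->
          sect S V3 (phi U2 V2 U3 V3 (phi U1 V1 U2 V2 x) - phi U1 V1 U3 V3 x))).
Proof.
move=> gS ker_hull; split.
  by move=> U V oU oV; rewrite sectU // sectI.
exists (fun U1 V1 U2 _ => sect_transfer S U1 V1 U2); split.
- by move=> U1 V1 U2 V2; apply: quot_iso_sect_transfer.
- move=> U1 V1 U2 V2 U3 V3 oU1 oV1 oU2 oV2 oU3 _ V1U1 V2U2 _.
  exact: sect_transfer_comp.
Qed.
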